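(* Let $\mu\in[0,1)$ and $\sigma>1$. For $Z\in[0,1]$ let \[ \delta(Z)=1-\frac{\mu}{\sigma}Z-\frac{\sigma-1}{\sigma}Z^2,\quad A(Z)=\frac{1}{\delta(Z)}\left[1+\frac{\mu}{\sigma-1}Z-\left(1+\frac{\mu^2}{\sigma-1}\right)Z^2\right],\quad B(Z)=-\frac{(\mu Z-1)^2}{\delta(Z)}, \] and let \[ Z^*=\frac{\mu(2\sigma-1)}{\sigma(1+\mu^2)-1}. \] Then for $Z\in(0,1]$: $A(Z)+B(Z)>0$ if $Z<Z^*$, and $A(Z)+B(Z)<0$ if $Z>Z^*$.
   Context: One has $\delta(Z)>0$ for all $Z\in[0,1]$, so $A$ and $B$ are well defined there. *)

From Stdlib Require Import Reals Lra.
Open Scope R_scope.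

Definition delta (mu sigma Z : R) : R :=
  1 - (mu / sigma) * Z - ((sigma - 1) / sigma) * Z ^ 2.

Definition Afun (mu sigma Z : R) : R :=
  (1 / delta mu sigma Z) *
  (1 + (mu / (sigma - 1)) * Z - (1 + mu ^ 2 / (sigma - 1)) * Z ^ 2).

Definition Bfun (mu sigma Z : R) : R :=
  - ((mu * Z - 1) ^ 2) / delta mu sigma Z.

Definition Zstar (mu sigma : R) : R :=
  mu * (2 * sigma - 1) / (sigma * (1 + mu ^ 2) - 1).

(* Over the common denominator (sigma - 1) delta(Z), which is positive on [0, 1],
   the numerator of A + B collapses to Z (mu (2 sigma - 1) - (sigma (1 + mu^2) - 1) Z),
   a downward parabola through 0 whose second root is Z*. *)
From Stdlib Require Import Reals Lra Psatz.
Open Scope R_scope.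

Lemma delta_pos (mu sigma Z : R) :
  0 <= mu < 1 -> 1 < sigma -> 0 <= Z <= 1 -> 0 < delta mu sigma Z.
Proof.
  intros [Hmu0 Hmu1] Hsigma [HZ0 HZ1].
  assert (HmuZ : mu * Z <= mu) by nra.
  assert (HZ2 : Z ^ 2 <= 1) by (simpl; nra).
  assert (Hnum : mu * Z + (sigma - 1) * Z ^ 2 < sigma) by nra.
  replace (delta mu sigma Z) with ((sigma - (mu * Z + (sigma - 1) * Z ^ 2)) / sigma)
    by (unfold delta; field; lra).
  apply Rdiv_lt_0_compat; lra.
Qed.

Lemma Afun_add_Bfun (mu sigma Z : R) :
  sigma <> 0 -> sigma <> 1 -> delta mu sigma Z <> 0 ->
  Afun mu sigma Z + Bfun mu sigma Z
  = Z * (mu * (2 * sigma - 1) - (sigma * (1 + mu ^ 2) - 1) * Z)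
    / ((sigma - 1) * delta mu sigma Z).
Proof.
  intros Hs0 Hs1 Hd.
  unfold Afun, Bfun.
  field; split; [exact Hd | lra].
Qed.

Lemma sub_mul_pos_of_lt_div (a b Z : R) : 0 < b -> Z < a / b -> 0 < a - b * Z.
Proof.
  intros Hb HZ.
  replace (a - b * Z) with (b * (a / b - Z)) by (field; lra).
  apply Rmult_lt_0_compat; lra.
Qed.

Lemma sub_mul_neg_of_div_lt (a b Z : R) : 0 < b -> a / b < Z -> a - b * Z < 0.
Proof.
  intros Hb HZ.
  replace (a - b * Z) with (- (b * (Z - a / b))) by (field; lra).
  apply Ropp_lt_gt_0_contravar, Rmult_lt_0_compat; lra.
Qed.

Theorem lemma3 (mu sigma : R) (Hmu0 : 0 <= mu) (Hmu1 : mu < 1) (Hsigma : 1 < sigma) :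
  forall Z : R, 0 < Z <= 1 ->
    (Z < Zstar mu sigma -> Afun mu sigma Z + Bfun mu sigma Z > 0) /\
    (Z > Zstar mu sigma -> Afun mu sigma Z + Bfun mu sigma Z < 0).
Proof.
  intros Z [HZ0 HZ1].
  assert (Hd : 0 < delta mu sigma Z) by (apply delta_pos; lra).
  assert (Hden : 0 < (sigma - 1) * delta mu sigma Z) by nra.
  assert (HD : 0 < sigma * (1 + mu ^ 2) - 1) by nra.
  rewrite Afun_add_Bfun by lra.
  unfold Zstar; split; intro HZ.
  - apply sub_mul_pos_of_lt_div in HZ; [| exact HD].
    apply Rdiv_lt_0_compat; [nra | exact Hden].
  - apply sub_mul_neg_of_div_lt in HZ; [| exact HD].
    apply Rdiv_neg_pos; [nra | exact Hden].
Qed.
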